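(* Let $n\ge 2$, let $M_1,\ldots,M_k\in\mathrm{H}(n,\mathbb{Q}(\mathrm{i}))$ be such that $M_1M_2\cdots M_k\in\Omega$, and let $\ell\ge1$ be an integer. Write $\psi(M_i)=(\boldsymbol{a}_i,\boldsymbol{b}_i,c_i)$ for $i=1,\ldots,k$. Then \[(M_1^\ell M_2^\ell\cdots M_k^\ell)_{1,n}=\ell\sum_{i=1}^k\Big(c_i-\tfrac12\boldsymbol{a}_i^T\boldsymbol{b}_i\Big)+\frac{\ell^2}{2}\sum_{1\le i<j\le k-1}[M_i,M_j].\]
   Context: $\mathbb{Q}(\mathrm{i})=\{a+b\mathrm{i}\mid a,b\in\mathbb{Q}\}$. $\mathrm{H}(n,\mathbb{Q}(\mathrm{i}))$ is the set of $n\times n$ matrices $M=\begin{pmatrix}1&\boldsymbol{m}_1^T&m_3\\ \boldsymbol{0}&\boldsymbol{I}_{n-2}&\boldsymbol{m}_2\\ 0&\boldsymbol{0}^T&1\end{pmatrix}$ with $\boldsymbol{m}_1,\boldsymbol{m}_2\in\mathbb{Q}(\mathrm{i})^{n-2}$, $m_3\in\mathbb{Q}(\mathrm{i})$, and $\psi(M)=(\boldsymbol{m}_1,\boldsymbol{m}_2,m_3)$. $\Omega$ is the set of such matrices with $\boldsymbol{m}_1=\boldsymbol{m}_2=\boldsymbol{0}$. $X_{1,n}$ is the top-right entry of $X$. For $M_i,M_j$ with $\psi(M_i)=(\boldsymbol{a}_i,\boldsymbol{b}_i,c_i)$, $\psi(M_j)=(\boldsymbol{a}_j,\boldsymbol{b}_j,c_j)$,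 the commutator is the scalar $[M_i,M_j]=\boldsymbol{a}_i^T\boldsymbol{b}_j-\boldsymbol{a}_j^T\boldsymbol{b}_i\in\mathbb{Q}(\mathrm{i})$ (transpose without conjugation). *)

From mathcomp Require Import all_boot all_order all_algebra all_field.
Set Implicit Arguments. Unset Strict Implicit. Unset Printing Implicit Defensive.
Import Order.TTheory GRing.Theory Num.Theory.
Local Open Scope ring_scope.

Definition Qi (z : algC) : Prop := exists a b : rat, z = ratr a + ratr b * 'i.

(* Matrices have size n = m.+2 (so n >= 2); indices are 'I_(m.+2) = {0..n-1}.
   The middle index j : 'I_m (0-based) corresponds to matrix index j+1. *)
Definition midx (m : nat) (j : 'I_m) : 'I_(m.+2) := lift ord0 (widen_ord (leqnSn m) j).

(* The matrix [[1, a^T, c], [0, I_{n-2}, b], [0, 0^T, 1]]. *)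
Definition mkH (m : nat) (a b : 'cV[algC]_m) (c : algC) : 'M[algC]_(m.+2) :=
  1%:M + \sum_(j < m) (a j ord0 *: delta_mx ord0 (midx j)
                       + b j ord0 *: delta_mx (midx j) ord_max)
       + c *: delta_mx ord0 ord_max.

Definition inH (m : nat) (M : 'M[algC]_(m.+2)) : Prop :=
  exists (a b : 'cV[algC]_m) (c : algC),
    (forall j, Qi (a j ord0)) /\ (forall j, Qi (b j ord0)) /\ Qi c /\ M = mkH a b c.

Definition psi_a (m : nat) (M : 'M[algC]_(m.+2)) : 'cV[algC]_m := \col_j M ord0 (midx j).
Definition psi_b (m : nat) (M : 'M[algC]_(m.+2)) : 'cV[algC]_m := \col_j M (midx j) ord_max.
Definition psi_c (m : nat) (M : 'M[algC]_(m.+2)) : algC := M ord0 ord_max.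
Definition psi (m : nat) (M : 'M[algC]_(m.+2)) := (psi_a M, psi_b M, psi_c M).

Definition inOmega (m : nat) (M : 'M[algC]_(m.+2)) : Prop :=
  inH M /\ psi_a M = 0 /\ psi_b M = 0.

Definition topright (m : nat) (X : 'M[algC]_(m.+2)) : algC := X ord0 ord_max.

(* a^T b as a scalar (transpose without conjugation) *)
Definition dotT (m : nat) (u v : 'cV[algC]_m) : algC := (u^T *m v) ord0 ord0.

Definition commH (m : nat) (M N : 'M[algC]_(m.+2)) : algC :=
  dotT (psi_a M) (psi_b N) - dotT (psi_a N) (psi_b M).

From mathcomp Require Import all_boot all_order all_algebra all_field.
From mathcomp Require Import ring zify.
Import Order.TTheory GRing.Theory Num.Theory.
Local Open Scope ring_scope.

(* Writing the elements of H as mkH a b c, the group law is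
   (a, b, c) (a', b', c') = (a + a', b + b', c + c' + a^T b'); hence
   M^l = (l a, l b, l c + C(l, 2) a^T b), and the top-right entry of M_1^l ... M_k^l is
   l sum_i c_i + C(l, 2) sum_i a_i^T b_i + l^2 sum_(i<j) a_i^T b_j.
   As M_1 ... M_k lies in Omega, sum_i a_i = sum_i b_i = 0, so d_ij = a_i^T b_j has
   vanishing row and column sums.  Splitting the full double sum of d into its two
   triangles and its diagonal then gives
   sum_(1 <= i < j <= k-1) (d_ij - d_ji) = sum_i d_ii + 2 sum_(i<j) d_ij,
   and the claim follows from C(l, 2) = (l^2 - l) / 2. *)

Section TriangularSums.
Variable R : zmodType.

Lemma sum_row_split {n} (D : 'I_n -> 'I_n -> R) i :
  \sum_(j < n) D i j
  = \sum_(j < n | (i < j)%N) D i j + \sum_(j < n | (j < i)%N) D i j + D i i.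
Proof.
rewrite (bigID (fun j : 'I_n => (i < j)%N)) /= -addrA; congr (_ + _).
rewrite (bigID (fun j : 'I_n => (j < i)%N)) /=; congr (_ + _).
  by apply: eq_bigl => j; rewrite -leqNgt andb_idl // => /ltnW.
by apply: big_pred1 => j /=; rewrite -!leqNgt andbC -eqn_leq val_eqE.
Qed.

Lemma sum_split_triangles {n} (D : 'I_n -> 'I_n -> R) :
  \sum_(i < n) \sum_(j < n) D i j
  = \sum_(i < n) \sum_(j < n | (i < j)%N) D i j
    + \sum_(i < n) \sum_(j < n | (i < j)%N) D j i + \sum_(i < n) D i i.
Proof.
rewrite (eq_bigr _ (fun i _ => sum_row_split D i)) !big_split /=.
by rewrite [X in _ + X + _](exchange_big_dep xpredT).
Qed.

Lemma sum_lt_drop_last {k} (D : 'I_k.+1 -> 'I_k.+1 -> R) :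
  \sum_(i < k.+1) \sum_(j < k.+1 | (i < j)%N && (j.+1 < k.+1)%N) D i j
  = \sum_(i < k.+1) \sum_(j < k.+1 | (i < j)%N) D i j
    + D ord_max ord_max - \sum_(i < k.+1) D i ord_max.
Proof.
have lt_max (j : 'I_k.+1) : (j < k)%N = (j != ord_max).
  by rewrite -val_eqE /= ltn_neqAle -ltnS ltn_ord andbT.
rewrite (exchange_big_dep (fun j : 'I_k.+1 => j != ord_max)) /=; last first.
  by move=> i j _ /andP[_]; rewrite ltnS lt_max.
rewrite [in RHS](exchange_big_dep xpredT) //= [in RHS](bigD1 ord_max) //=.
rewrite [X in _ - X](bigD1 ord_max) //= (eq_bigl _ _ lt_max) opprD.
rewrite addrA addrK addrAC addrN add0r.
by apply: eq_bigr => j nj; apply: eq_bigl => i; rewrite ltnS lt_max nj andbT.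
Qed.

Lemma sum_lt_skew_drop_last {k} (D : 'I_k.+1 -> 'I_k.+1 -> R)
    (row0 : forall i, \sum_(j < k.+1) D i j = 0)
    (col0 : forall j, \sum_(i < k.+1) D i j = 0) :
  \sum_(i < k.+1) \sum_(j < k.+1 | (i < j)%N && (j.+1 < k.+1)%N) (D i j - D j i)
  = \sum_(i < k.+1) D i i + (\sum_(i < k.+1) \sum_(j < k.+1 | (i < j)%N) D i j) *+ 2.
Proof.
have := sum_split_triangles D; rewrite big1 // => total.
under eq_bigr do rewrite sumrB.
rewrite sumrB (sum_lt_drop_last D) (sum_lt_drop_last (fun i j => D j i)) /=.
rewrite col0 row0 !subr0 opprD addrACA addrN addr0.
move/eqP: total; rewrite eq_sym addrAC addrC addr_eq0 => /eqP ->.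
by rewrite opprK mulr2n addrA addrC.
Qed.
End TriangularSums.

Section DotT.
Variable m : nat.
Implicit Types u v : 'cV[algC]_m.

Lemma dotTE u v : dotT u v = \sum_t u t ord0 * v t ord0.
Proof. by rewrite /dotT mxE; apply: eq_bigr => t _; rewrite mxE. Qed.

Lemma dotT_suml (I : Type) (r : seq I) (P : pred I) (F : I -> 'cV[algC]_m) v :
  dotT (\sum_(i <- r | P i) F i) v = \sum_(i <- r | P i) dotT (F i) v.
Proof.
rewrite dotTE; under eq_bigr do rewrite summxE mulr_suml.
by rewrite exchange_big; apply: eq_bigr => i _; rewrite dotTE.
Qed.

Lemma dotT_sumr (I : Type) (r : seq I) (P : pred I) (F : I -> 'cV[algC]_m) u :
  dotT u (\sum_(i <- r | P i) F i) = \sum_(i <- r | P i) dotT u (F i).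
Proof.
rewrite dotTE; under eq_bigr do rewrite summxE mulr_sumr.
by rewrite exchange_big; apply: eq_bigr => i _; rewrite dotTE.
Qed.

Lemma dotT0l v : dotT 0 v = 0.
Proof. by rewrite dotTE big1 // => t _; rewrite mxE mul0r. Qed.

Lemma dotT0r u : dotT u 0 = 0.
Proof. by rewrite dotTE big1 // => t _; rewrite mxE mulr0. Qed.

Lemma dotTMnl u v l : dotT (u *+ l) v = dotT u v *+ l.
Proof. by rewrite !dotTE -sumrMnl; apply: eq_bigr => t _; rewrite mulmxnE mulrnAl. Qed.

Lemma dotTMnr u v l : dotT u (v *+ l) = dotT u v *+ l.
Proof. by rewrite !dotTE -sumrMnl; apply: eq_bigr => t _; rewrite mulmxnE mulrnAr. Qed.

End DotT.

Lemma sum_ord_recl_gt (V : zmodType) k p (F : 'I_k.+1 -> V) :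
  \sum_(j < k.+1 | (p < j)%N) F j = \sum_(j < k | (p <= j)%N) F (lift ord0 j).
Proof.
rewrite big_mkcond big_ord_recl /= add0r [RHS]big_mkcond.
by apply: eq_bigr => j _; rewrite /bump leq0n add1n ltnS.
Qed.

Section DeltaSums.
Variables (R : comPzRingType) (n : nat).

Lemma sum_delta_mx_entry (I : finType) (x : I -> R) (f g : I -> 'I_n) i j :
  (\sum_t x t *: delta_mx (f t) (g t)) i j = \sum_(t | (i == f t) && (j == g t)) x t.
Proof.
by rewrite summxE [RHS]big_mkcond; apply: eq_bigr => t _; rewrite !mxE mulr_natr mulrb.
Qed.

Lemma mulmx_delta_sums_eq0 (I J : finType) (x : I -> R) (y : J -> R)
    (f g : I -> 'I_n) (f' g' : J -> 'I_n) :
  (forall t s, g t != f' s) ->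
  (\sum_t x t *: delta_mx (f t) (g t)) *m (\sum_s y s *: delta_mx (f' s) (g' s)) = 0.
Proof.
move=> ne; rewrite mulmx_suml big1 // => t _; rewrite mulmx_sumr big1 // => s _.
by rewrite -scalemxAl -scalemxAr mul_delta_mx_0 ?scaler0.
Qed.

End DeltaSums.

Section HeisenbergMatrices.
Variable m : nat.
Implicit Types (a b : 'cV[algC]_m) (c : algC).

Lemma midx_neq0 (j : 'I_m) : midx j != ord0.
Proof. by []. Qed.

Lemma midx_neq_max (j : 'I_m) : midx j != ord_max.
Proof. by rewrite -val_eqE /= neq_ltn ltnS ltn_ord. Qed.

Lemma midx_inj : injective (@midx m).
Proof. by move=> j j' /(congr1 val) [] /val_inj. Qed.

Definition first_row a : 'M[algC]_(m.+2) := \sum_j a j ord0 *: delta_mx ord0 (midx j).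
Definition last_col b : 'M[algC]_(m.+2) := \sum_j b j ord0 *: delta_mx (midx j) ord_max.
Definition corner_mx : 'M[algC]_(m.+2) := delta_mx ord0 ord_max.
Definition nilH a b c := first_row a + last_col b + c *: corner_mx.

Lemma mkHE a b c : mkH a b c = 1%:M + nilH a b c.
Proof. by rewrite /mkH big_split -addrA. Qed.

Lemma first_row_mul_last_col a b : first_row a *m last_col b = dotT a b *: corner_mx.
Proof.
rewrite mulmx_suml dotTE scaler_suml; apply: eq_bigr => j _.
rewrite mulmx_sumr (bigD1 j) //= big1 ?addr0 => [|j' j'j].
  by rewrite -scalemxAl -scalemxAr mul_delta_mx scalerA.
by rewrite -scalemxAl -scalemxAr mul_delta_mx_0 ?scaler0 // (inj_eq midx_inj) eq_sym.
Qed.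

Lemma nilH_mul a b c a' b' c' : nilH a b c *m nilH a' b' c' = dotT a b' *: corner_mx.
Proof.
have corner_sum x : x *: corner_mx = \sum_(t < 1) x *: delta_mx ord0 ord_max.
  by rewrite big_ord1.
rewrite /nilH !mulmxDl !mulmxDr first_row_mul_last_col (corner_sum c) (corner_sum c').
by rewrite /first_row /last_col !mulmx_delta_sums_eq0 ?addr0 ?add0r // => t s;
  rewrite eq_sym midx_neq_max.
Qed.

Lemma mkH_first_row a b c j : mkH a b c ord0 (midx j) = a j ord0.
Proof.
rewrite mkHE /nilH /first_row /last_col !mxE !sum_delta_mx_entry.
rewrite eqxx (negbTE (midx_neq_max j)) mulr0 addr0.
rewrite (big_pred1 j) => [|t]; last by rewrite /= (inj_eq midx_inj) eq_sym.
rewrite big_pred0 => [|t]; last by rewrite andbF.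
by rewrite eq_sym (negbTE (midx_neq0 j)) add0r addr0.
Qed.

Lemma mkH_last_col a b c j : mkH a b c (midx j) ord_max = b j ord0.
Proof.
rewrite mkHE /nilH /first_row /last_col !mxE !sum_delta_mx_entry.
rewrite eqxx (negbTE (midx_neq0 j)) (negbTE (midx_neq_max j)) mulr0 addr0 add0r.
rewrite big_pred0 // add0r (big_pred1 j) // => t.
by rewrite /= andbT (inj_eq midx_inj) eq_sym.
Qed.

Lemma mkH_corner a b c : mkH a b c ord0 ord_max = c.
Proof.
rewrite mkHE /nilH /first_row /last_col !mxE !sum_delta_mx_entry !eqxx /= mulr1.
by rewrite !big_pred0 ?add0r // => t; rewrite eq_sym ?(negbTE (midx_neq_max t)).
Qed.

Lemma psi_a_mkH a b c : psi_a (mkH a b c) = a.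
Proof. by apply/matrixP => j i; rewrite mxE mkH_first_row (ord1 i). Qed.

Lemma psi_b_mkH a b c : psi_b (mkH a b c) = b.
Proof. by apply/matrixP => j i; rewrite mxE mkH_last_col (ord1 i). Qed.

Lemma mkH_psi (M : 'M[algC]_(m.+2)) : inH M -> M = mkH (psi_a M) (psi_b M) (psi_c M).
Proof.
by case=> a [b [c [_ [_ [_ ->]]]]]; rewrite psi_a_mkH psi_b_mkH /psi_c mkH_corner.
Qed.

Lemma first_rowD a a' : first_row (a + a') = first_row a + first_row a'.
Proof. by rewrite /first_row -big_split; apply: eq_bigr => j _; rewrite mxE scalerDl. Qed.

Lemma last_colD b b' : last_col (b + b') = last_col b + last_col b'.
Proof. by rewrite /last_col -big_split; apply: eq_bigr => j _; rewrite mxE scalerDl. Qed.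

Lemma nilHD a b c a' b' c' :
  nilH (a + a') (b + b') (c + c') = nilH a b c + nilH a' b' c'.
Proof.
by rewrite /nilH first_rowD last_colD scalerDl [RHS]addrACA (addrACA (first_row a)).
Qed.

Lemma mkH0 : mkH (0 : 'cV_m) 0 0 = 1.
Proof.
by rewrite mkHE /nilH /first_row /last_col scale0r !big1 ?addr0 // => j _;
  rewrite mxE scale0r.
Qed.

Lemma mkH_mul a b c a' b' c' :
  mkH a b c *m mkH a' b' c' = mkH (a + a') (b + b') (c + c' + dotT a b').
Proof.
rewrite !mkHE mulmxDl !(mulmxDr _ 1%:M) !mul1mx !mulmx1 nilH_mul -addrA; congr (_ + _).
by rewrite addrCA addrA -nilHD /nilH (scalerDl _ (c + c')) [RHS]addrA.
Qed.

Lemma mkH_exp a b c l :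
  mkH a b c ^+ l = mkH (a *+ l) (b *+ l) (c *+ l + dotT a b *+ 'C(l, 2)).
Proof.
elim: l => [|l IH]; first by rewrite expr0 !mulr0n addr0 mkH0.
rewrite exprS -mulmxE IH mkH_mul dotTMnr binS bin1 !mulrS.
by congr mkH; rewrite mulrnDr !addrA.
Qed.

Lemma prod_mkH k (a b : 'I_k -> 'cV[algC]_m) (c : 'I_k -> algC) :
  \prod_(i < k) mkH (a i) (b i) (c i)
  = mkH (\sum_(i < k) a i) (\sum_(i < k) b i)
        (\sum_(i < k) c i + \sum_(i < k) \sum_(j < k | (i < j)%N) dotT (a i) (b j)).
Proof.
elim: k a b c => [|k IH] a b c; first by rewrite !big_ord0 addr0 mkH0.
rewrite big_ord_recl IH -mulmxE mkH_mul !big_ord_recl; congr mkH.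
rewrite sum_ord_recl_gt dotT_sumr [\sum_(j < k | _) dotT (a ord0) _](eq_bigl xpredT) //.
under [X in _ + (_ + X)]eq_bigr do rewrite sum_ord_recl_gt lift0.
by rewrite !addrA [LHS]addrAC.
Qed.
End HeisenbergMatrices.

Lemma bin2_double l : ('C(l, 2) * 2 + l = l ^ 2)%N.
Proof. by elim: l => // l IH; rewrite binS bin1 !expnS expn0 !muln1 in IH *; nia. Qed.

Lemma topright_prod_mkH_exp m k (a b : 'I_k.+1 -> 'cV[algC]_m) (c : 'I_k.+1 -> algC) l :
  \sum_(i < k.+1) a i = 0 -> \sum_(i < k.+1) b i = 0 ->
  topright (\prod_(i < k.+1) mkH (a i) (b i) (c i) ^+ l)
  = l%:R * (\sum_(i < k.+1) (c i - 2^-1 * dotT (a i) (b i)))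
    + (l ^ 2)%:R / 2 * (\sum_(i < k.+1) \sum_(j < k.+1 | (i < j)%N && (j.+1 < k.+1)%N)
                           (dotT (a i) (b j) - dotT (a j) (b i))).
Proof.
move=> sum_a0 sum_b0.
under eq_bigr do rewrite mkH_exp.
rewrite prod_mkH /topright mkH_corner sum_lt_skew_drop_last => [|i|j]; first last.
- by rewrite -dotT_suml sum_a0 dotT0l.
- by rewrite -dotT_sumr sum_b0 dotT0r.
have scaled_pairs : \sum_(i < k.+1) \sum_(j < k.+1 | (i < j)%N) dotT (a i *+ l) (b j *+ l)
    = (\sum_(i < k.+1) \sum_(j < k.+1 | (i < j)%N) dotT (a i) (b j)) *+ (l ^ 2).
  rewrite -sumrMnl; apply: eq_bigr => i _; rewrite -sumrMnl; apply: eq_bigr => j _.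
  by rewrite dotTMnl dotTMnr -mulrnA mulnn.
rewrite scaled_pairs big_split /= !sumrMnl sumrB -mulr_sumr.
set C := \sum_(i < k.+1) c i; set Dg := \sum_(i < k.+1) dotT _ _; set S := \sum_(i < k.+1) _.
rewrite -(mulr_natr C) -(mulr_natr Dg) -!(mulr_natr S) -bin2_double natrD natrM.
by clearbody C Dg S; field.
Qed.

Theorem lemma3 (m k l : nat) (Ms : 'I_k -> 'M[algC]_(m.+2))
  (HMs : forall i, inH (Ms i))
  (Hprod : inOmega (\prod_(i < k) Ms i))
  (Hl : (1 <= l)%N) :
  topright (\prod_(i < k) (Ms i) ^+ l)
  = l%:R * (\sum_(i < k) (psi_c (Ms i) - 2^-1 * dotT (psi_a (Ms i)) (psi_b (Ms i))))
    + (l ^ 2)%:R / 2 * (\sum_(i < k) \sum_(j < k | (i < j)%N && (j.+1 < k)%N)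
                           commH (Ms i) (Ms j)).
Proof.
case: k Ms HMs Hprod => [|k] Ms HMs Hprod.
  by rewrite !big_ord0 /topright mxE !mulr0 addr0.
have Ms_mkH i : Ms i = mkH (psi_a (Ms i)) (psi_b (Ms i)) (psi_c (Ms i)).
  exact: mkH_psi (HMs i).
case: Hprod => _; rewrite (eq_bigr _ (fun i _ => Ms_mkH i)) prod_mkH.
rewrite psi_a_mkH psi_b_mkH => -[sum_a0 sum_b0].
rewrite (eq_bigr _ (fun i _ => congr1 (fun M => M ^+ l) (Ms_mkH i))).
exact: topright_prod_mkH_exp.
Qed.
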